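(* Let $f_1,f_2,f_3$ be smooth nowhere-vanishing functions on $\mathbb R^3$ each depending only on $x^1$, $g=\frac{1}{f_1^2}dx^1\otimes dx^1+\frac{1}{f_2^2}dx^2\otimes dx^2+\frac{1}{f_3^2}dx^3\otimes dx^3$, and $V=\sum_{k=1}^3V^kE_k$ with $E_i=f_i\frac{\partial}{\partial x^i}$ and $V^1,V^2,V^3$ smooth functions depending only on $x^1$. Then $V$ is a Killing vector field of $(\mathbb R^3,g)$ if and only if one of the following holds: (i) $V^1=c_1\in\mathbb R\setminus\{0\}$, $V^2=c_2$, $V^3=c_3$ with $c_2,c_3\in\mathbb R$, and $f_2,f_3$ are constant; (ii) $V^1=0$, $V^2=\frac{c_2}{f_2}$, $V^3=\frac{c_3}{f_3}$ with $c_2,c_3\in\mathbb R$.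
   Context: $x^1,x^2,x^3$ are the standard coordinates on $\mathbb R^3$. A vector field $V$ is Killing if $\mathcal L_Vg=0$. *)

From Stdlib Require Import Reals.
From Coquelicot Require Import Coquelicot.
Open Scope R_scope.

(* Points of R^3 ; coordinate index 0,1,2 stands for x^1,x^2,x^3. *)
Definition pt : Type := (R * R * R)%type.

Definition coord (p : pt) (i : nat) : R :=
  match i with
  | O => fst (fst p)
  | S O => snd (fst p)
  | _ => snd p
  end.

Definition upd (p : pt) (i : nat) (t : R) : pt :=
  match i with
  | O => (t, snd (fst p), snd p)
  | S O => (fst (fst p), t, snd p)
  | _ => (fst (fst p), snd (fst p), t)
  end.

Definition partial (i : nat) (F : pt -> R) (p : pt) : R :=
  Derive (fun t => F (upd p i t)) (coord p i).

Definition sum3 (h : nat -> R) : R := h 0%nat + h 1%nat + h 2%nat.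

Definition smooth (h : R -> R) : Prop := forall (n : nat) (x : R), ex_derive_n h n x.

Definition lift1 (h : R -> R) : pt -> R := fun p => h (coord p 0).

Definition fam3 {A : Type} (a1 a2 a3 : A) (k : nat) : A :=
  match k with O => a1 | S O => a2 | _ => a3 end.

(* Vector fields on R^3 are given by their coordinate components W m (m = 0,1,2),
   i.e. W = sum_m W^m d/dx^(m+1); symmetric 2-tensors by components g i j. *)

Definition lie_deriv_metric (W : nat -> pt -> R) (g : nat -> nat -> pt -> R)
  (i j : nat) (p : pt) : R :=
  sum3 (fun m => W m p * partial m (g i j) p
                 + g m j p * partial i (W m) p
                 + g i m p * partial j (W m) p).

Definition Killing (W : nat -> pt -> R) (g : nat -> nat -> pt -> R) : Prop :=
  forall (i j : nat) (p : pt), (i < 3)%nat -> (j < 3)%nat -> lie_deriv_metric W g i j p = 0.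

Definition diag_metric (f1 f2 f3 : R -> R) : nat -> nat -> pt -> R :=
  fun i j p => if Nat.eqb i j then 1 / (lift1 (fam3 f1 f2 f3 i) p) ^ 2 else 0.

Definition Eframe (f1 f2 f3 : R -> R) (k : nat) : nat -> pt -> R :=
  fun m p => if Nat.eqb m k then lift1 (fam3 f1 f2 f3 k) p else 0.

Definition frame_field (f1 f2 f3 V1 V2 V3 : R -> R) : nat -> pt -> R :=
  fun m p => sum3 (fun k => lift1 (fam3 V1 V2 V3 k) p * Eframe f1 f2 f3 k m p).

(* Since all data depend on x^1 only, the Killing equations (L_V g)_{ij} = 0
   collapse to the ODE system V1' = 0, V1 f2' = 0, V1 f3' = 0, (V2 f2)' = 0,
   (V3 f3)' = 0, the (2,3) equation being void.  Hence V1 and V_k f_k are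
   constant, and according as the constant V1 vanishes or not, either nothing
   more is imposed or f2 and f3 are constant as well. *)

From Stdlib Require Import Reals Lra Lia.
From Coquelicot Require Import Coquelicot.
Open Scope R_scope.

Lemma smooth_ex_derive (h : R -> R) : smooth h -> forall x, ex_derive h x.
Proof. intros sh x. exact (sh 1%nat x). Qed.

Lemma Derive_zero_constant (h : R -> R) :
  (forall x, ex_derive h x) -> (forall x, Derive h x = 0) -> forall t, h t = h 0.
Proof.
intros dh h'0 t.
destruct (MVT_gen h 0 t (Derive h)) as [c [_ Hc]].
- intros x _. now apply Derive_correct.
- intros x _. apply continuity_pt_filterlim.
  now apply (@ex_derive_continuous R_AbsRing R_NormedModule).
- rewrite h'0 in Hc. lra.
Qed.

Lemma Derive_constant_fun (h : R -> R) (c : R) :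
  (forall t, h t = c) -> forall x, Derive h x = 0.
Proof. intros hc x. rewrite (Derive_ext h (fun _ => c)) by exact hc. apply Derive_const. Qed.

Lemma Derive_inv_sq (h : R -> R) (x : R) : ex_derive h x -> h x <> 0 ->
  Derive (fun t => 1 / h t ^ 2) x = -2 * Derive h x / h x ^ 3.
Proof.
intros dh hx. apply is_derive_unique. auto_derive.
- rewrite Rmult_1_r. split; [exact dh | split; [| exact I]].
  now apply Rmult_integral_contrapositive_currified.
- change (Derive (fun t => h t) x) with (Derive h x). field. exact hx.
Qed.

Lemma Rdiv_neq_0_compat (a b : R) : a <> 0 -> b <> 0 -> a / b <> 0.
Proof. intros a0 b0. apply Rmult_integral_contrapositive_currified; [exact a0 |]. now apply Rinv_neq_0_compat. Qed.

Lemma Rmult_eq_0_reg_l (a b : R) : a <> 0 -> a * b = 0 -> b = 0.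
Proof. intros a0 ab. apply (Rmult_eq_reg_l a); [lra | exact a0]. Qed.

Lemma partial_x1 (F : pt -> R) (h : R -> R) (m : nat) (p : pt) :
  (forall q, F q = h (coord q 0)) ->
  partial m F p = if Nat.eqb m 0 then Derive h (coord p 0) else 0.
Proof.
intros Fh. unfold partial. destruct p as [[a b] c].
destruct m as [|[|m]]; simpl.
- apply Derive_ext. intro t. apply Fh.
- apply (Derive_constant_fun _ (h a)). intro t. apply Fh.
- apply (Derive_constant_fun _ (h a)). intro t. apply Fh.
Qed.

Section FrameField.

Variables f1 f2 f3 V1 V2 V3 : R -> R.
Hypotheses (nf1 : forall t, f1 t <> 0) (nf2 : forall t, f2 t <> 0) (nf3 : forall t, f3 t <> 0).
Hypotheses (df1 : forall t, ex_derive f1 t) (df2 : forall t, ex_derive f2 t)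
  (df3 : forall t, ex_derive f3 t).
Hypotheses (dV1 : forall t, ex_derive V1 t) (dV2 : forall t, ex_derive V2 t)
  (dV3 : forall t, ex_derive V3 t).

Let V := frame_field f1 f2 f3 V1 V2 V3.
Let g := diag_metric f1 f2 f3.

Definition frame_coeff (m : nat) (t : R) : R := fam3 V1 V2 V3 m t * fam3 f1 f2 f3 m t.

Lemma frame_field_coord (m : nat) (p : pt) : (m < 3)%nat ->
  V m p = frame_coeff m (coord p 0).
Proof.
intro m3. unfold V, frame_field, frame_coeff, sum3, Eframe, lift1.
destruct m as [|[|[|m]]]; simpl; [ring | ring | ring | lia].
Qed.

Lemma partial_frame_field (k m : nat) (p : pt) : (m < 3)%nat ->
  partial k (V m) p = if Nat.eqb k 0 then Derive (frame_coeff m) (coord p 0) else 0.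
Proof. intro m3. apply partial_x1. intro q. now apply frame_field_coord. Qed.

Lemma partial_diag_metric (k i j : nat) (p : pt) :
  partial k (g i j) p =
  if Nat.eqb k 0
  then Derive (fun t => if Nat.eqb i j then 1 / fam3 f1 f2 f3 i t ^ 2 else 0) (coord p 0)
  else 0.
Proof. now apply partial_x1. Qed.

Definition killing_component (i j : nat) (x : R) : R :=
  match i, j with
  | O, O => 2 / f1 x * Derive V1 x
  | O, S O | S O, O => / f2 x ^ 2 * Derive (frame_coeff 1) x
  | O, _ | _, O => / f3 x ^ 2 * Derive (frame_coeff 2) x
  | S O, S O => -2 * f1 x / f2 x ^ 3 * (V1 x * Derive f2 x)
  | S O, _ | _, S O => 0
  | _, _ => -2 * f1 x / f3 x ^ 3 * (V1 x * Derive f3 x)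
  end.

Lemma lie_deriv_frame_field (i j : nat) (p : pt) : (i < 3)%nat -> (j < 3)%nat ->
  lie_deriv_metric V g i j p = killing_component i j (coord p 0).
Proof.
intros i3 j3. unfold lie_deriv_metric, sum3.
rewrite !partial_frame_field, !partial_diag_metric, !frame_field_coord by lia.
unfold killing_component, g, diag_metric, lift1, frame_coeff.
set (x := coord p 0).
destruct i as [|[|[|i]]]; try lia; destruct j as [|[|[|j]]]; try lia;
  cbn [Nat.eqb fam3]; rewrite ?Derive_const, ?Derive_inv_sq, ?Derive_mult by auto;
  field; auto.
Qed.

Definition killing_system : Prop :=
  forall x, Derive V1 x = 0 /\ V1 x * Derive f2 x = 0 /\ V1 x * Derive f3 x = 0 /\
    Derive (frame_coeff 1) x = 0 /\ Derive (frame_coeff 2) x = 0.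

Lemma Killing_iff_killing_system : Killing V g <-> killing_system.
Proof.
split.
- intros K x.
  assert (Kx : forall i j, (i < 3)%nat -> (j < 3)%nat -> killing_component i j x = 0).
  { intros i j i3 j3. rewrite <- (K i j (x, 0, 0) i3 j3).
    symmetry. exact (lie_deriv_frame_field i j (x, 0, 0) i3 j3). }
  repeat split.
  - apply (Rmult_eq_0_reg_l (2 / f1 x)); [apply Rdiv_neq_0_compat; auto; lra |].
    exact (Kx 0%nat 0%nat ltac:(lia) ltac:(lia)).
  - apply (Rmult_eq_0_reg_l (-2 * f1 x / f2 x ^ 3)).
    + apply Rdiv_neq_0_compat; [apply Rmult_integral_contrapositive_currified; auto; lra |].
      now apply pow_nonzero.
    + exact (Kx 1%nat 1%nat ltac:(lia) ltac:(lia)).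
  - apply (Rmult_eq_0_reg_l (-2 * f1 x / f3 x ^ 3)).
    + apply Rdiv_neq_0_compat; [apply Rmult_integral_contrapositive_currified; auto; lra |].
      now apply pow_nonzero.
    + exact (Kx 2%nat 2%nat ltac:(lia) ltac:(lia)).
  - apply (Rmult_eq_0_reg_l (/ f2 x ^ 2)); [now apply Rinv_neq_0_compat, pow_nonzero |].
    exact (Kx 0%nat 1%nat ltac:(lia) ltac:(lia)).
  - apply (Rmult_eq_0_reg_l (/ f3 x ^ 2)); [now apply Rinv_neq_0_compat, pow_nonzero |].
    exact (Kx 0%nat 2%nat ltac:(lia) ltac:(lia)).
- intros S i j p i3 j3. rewrite lie_deriv_frame_field by auto.
  destruct (S (coord p 0)) as (S1 & S2 & S3 & S4 & S5).
  unfold killing_component.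
  destruct i as [|[|[|i]]]; try lia; destruct j as [|[|[|j]]]; try lia;
    rewrite ?S1, ?S2, ?S3, ?S4, ?S5; ring.
Qed.

Lemma ex_derive_frame_coeff (m : nat) (t : R) : ex_derive (frame_coeff m) t.
Proof.
unfold frame_coeff. apply ex_derive_mult; destruct m as [|[|m]]; simpl; auto.
Qed.

Definition killing_cases : Prop :=
  (exists c1 c2 c3 : R, c1 <> 0 /\
      (forall t, V1 t = c1) /\ (forall t, V2 t = c2) /\ (forall t, V3 t = c3) /\
      (exists a2, forall t, f2 t = a2) /\ (exists a3, forall t, f3 t = a3))
   \/
   ((forall t, V1 t = 0) /\
    exists c2 c3 : R, (forall t, V2 t = c2 / f2 t) /\ (forall t, V3 t = c3 / f3 t)).

Lemma killing_system_cases : killing_system -> killing_cases.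
Proof.
intro S.
assert (C1 : forall t, V1 t = V1 0).
{ apply Derive_zero_constant; [exact dV1 | intro x; apply (S x)]. }
assert (C2 : forall t, frame_coeff 1 t = frame_coeff 1 0).
{ apply Derive_zero_constant; [apply ex_derive_frame_coeff | intro x; apply (S x)]. }
assert (C3 : forall t, frame_coeff 2 t = frame_coeff 2 0).
{ apply Derive_zero_constant; [apply ex_derive_frame_coeff | intro x; apply (S x)]. }
unfold frame_coeff in C2, C3; simpl in C2, C3.
destruct (Req_dec (V1 0) 0) as [V1_0 | V1_n0].
- right. split; [intro t; now rewrite C1 |].
  exists (V2 0 * f2 0), (V3 0 * f3 0).
  split; intro t; [rewrite <- (C2 t) | rewrite <- (C3 t)]; field; auto.
- assert (F2 : forall t, f2 t = f2 0).
  { apply Derive_zero_constant; [exact df2 | intro x].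
    apply (Rmult_eq_0_reg_l (V1 0)); [exact V1_n0 |]. rewrite <- (C1 x). apply (S x). }
  assert (F3 : forall t, f3 t = f3 0).
  { apply Derive_zero_constant; [exact df3 | intro x].
    apply (Rmult_eq_0_reg_l (V1 0)); [exact V1_n0 |]. rewrite <- (C1 x). apply (S x). }
  left. exists (V1 0), (V2 0), (V3 0).
  split; [exact V1_n0 |]. split; [exact C1 |].
  split; [| split; [| split; [now exists (f2 0) | now exists (f3 0)]]]; intro t.
  + apply (Rmult_eq_reg_r (f2 t)); [now rewrite C2, (F2 t) | apply nf2].
  + apply (Rmult_eq_reg_r (f3 t)); [now rewrite C3, (F3 t) | apply nf3].
Qed.

Lemma killing_cases_system : killing_cases -> killing_system.
Proof.
intros [(c1 & c2 & c3 & _ & e1 & e2 & e3 & [a2 e2'] & [a3 e3']) | (e1 & c2 & c3 & e2 & e3)] x.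
- rewrite (Derive_constant_fun f2 a2), (Derive_constant_fun f3 a3) by auto.
  rewrite (Derive_constant_fun V1 c1) by auto.
  rewrite (Derive_constant_fun (frame_coeff 1) (c2 * a2)),
    (Derive_constant_fun (frame_coeff 2) (c3 * a3)); repeat split; try ring;
    intro t; unfold frame_coeff; simpl; now rewrite ?e2, ?e2', ?e3, ?e3'.
- rewrite (Derive_constant_fun V1 0), e1 by auto.
  rewrite (Derive_constant_fun (frame_coeff 1) c2), (Derive_constant_fun (frame_coeff 2) c3);
    repeat split; try ring;
    intro t; unfold frame_coeff; simpl; rewrite ?e2, ?e3; field; auto.
Qed.

End FrameField.

Theorem mainTheorem7 (f1 f2 f3 V1 V2 V3 : R -> R)
  (sf1 : smooth f1) (sf2 : smooth f2) (sf3 : smooth f3)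
  (nf1 : forall t, f1 t <> 0) (nf2 : forall t, f2 t <> 0) (nf3 : forall t, f3 t <> 0)
  (sV1 : smooth V1) (sV2 : smooth V2) (sV3 : smooth V3) :
  Killing (frame_field f1 f2 f3 V1 V2 V3) (diag_metric f1 f2 f3) <->
  ((exists c1 c2 c3 : R, c1 <> 0 /\
      (forall t, V1 t = c1) /\ (forall t, V2 t = c2) /\ (forall t, V3 t = c3) /\
      (exists a2, forall t, f2 t = a2) /\ (exists a3, forall t, f3 t = a3))
   \/
   ((forall t, V1 t = 0) /\
    exists c2 c3 : R, (forall t, V2 t = c2 / f2 t) /\ (forall t, V3 t = c3 / f3 t))).
Proof.
pose proof (smooth_ex_derive f1 sf1) as df1; pose proof (smooth_ex_derive f2 sf2) as df2;
  pose proof (smooth_ex_derive f3 sf3) as df3; pose proof (smooth_ex_derive V1 sV1) as dV1;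
  pose proof (smooth_ex_derive V2 sV2) as dV2; pose proof (smooth_ex_derive V3 sV3) as dV3.
rewrite Killing_iff_killing_system by assumption.
split; [apply killing_system_cases | apply killing_cases_system]; assumption.
Qed.
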